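(* Let $n_1<n_2<n_3$ be positive integers with $\gcd(n_1,n_2,n_3)=1$ minimally generating a numerical semigroup $S=\langle n_1,n_2,n_3\rangle$ that is not symmetric. Then $c_1>r_{12}+r_{13}$ and $c_3<r_{31}+r_{32}$.
   Context: $S=\{x_1n_1+x_2n_2+x_3n_3 : x_i\in\mathbb N\}$; minimally generated means no $n_i$ lies in the submonoid generated by the other two. With $F=\max(\mathbb Z\setminus S)$, $S$ is symmetric if $x\in\mathbb Z\setminus S$ implies $F-x\in S$. For $\{i,j,k\}=\{1,2,3\}$, $c_i=\min\{c\in\mathbb Z^+ : cn_i\in\langle n_j,n_k\rangle\}$, and $r_{ij},r_{ik}$ are the (for nonsymmetric $S$ unique, positive) integers with $c_in_i=r_{ij}n_j+r_{ik}n_k$. *)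

From mathcomp Require Import all_boot all_order all_algebra.
Set Implicit Arguments. Unset Strict Implicit. Unset Printing Implicit Defensive.
Import Order.TTheory GRing.Theory Num.Theory.
Local Open Scope ring_scope.

Definition inS3 (n1 n2 n3 : nat) (x : int) : Prop :=
  exists x1 x2 x3 : nat, x = (x1 * n1 + x2 * n2 + x3 * n3)%N%:Z.

Definition in2 (a b : nat) (m : nat) : Prop :=
  exists y1 y2 : nat, m = (y1 * a + y2 * b)%N.

Definition min_gen3 (n1 n2 n3 : nat) : Prop :=
  ~ in2 n2 n3 n1 /\ ~ in2 n1 n3 n2 /\ ~ in2 n1 n2 n3.

Definition is_frobenius (n1 n2 n3 : nat) (F : int) : Prop :=
  ~ inS3 n1 n2 n3 F /\ (forall x : int, F < x -> inS3 n1 n2 n3 x).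

Definition symmetric3 (n1 n2 n3 : nat) : Prop :=
  forall F : int, is_frobenius n1 n2 n3 F ->
    forall x : int, ~ inS3 n1 n2 n3 x -> inS3 n1 n2 n3 (F - x).

Definition is_c (ni nj nk : nat) (c : nat) : Prop :=
  (0 < c)%N /\ in2 nj nk (c * ni) /\
  (forall c' : nat, (0 < c')%N -> in2 nj nk (c' * ni) -> (c <= c')%N).

From mathcomp Require Import all_boot all_order all_algebra.
From mathcomp Require Import zify.

(* Only the ordering n1 < n2 < n3 is needed: the combination
   r12 n2 + r13 n3 = c1 n1 has coefficients sum r12 + r13 > 0 and all its
   generators exceed n1, so it is larger than (r12 + r13) n1; symmetrically
   r31 n1 + r32 n2 = c3 n3 is smaller than (r31 + r32) n3. *)

Lemma coef_sum_lt_of_lt_weights (c n a b p q : nat) :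
  0 < c -> 0 < n -> n < p -> n < q -> c * n = a * p + b * q -> a + b < c.
Proof.
move=> c_gt0 n_gt0 n_lt_p n_lt_q def_cn.
have ab_gt0 : 0 < a + b by nia.
have : (a + b) * n < c * n by nia.
by rewrite ltn_pmul2r.
Qed.

Lemma lt_coef_sum_of_gt_weights (c n a b p q : nat) :
  0 < c -> p < n -> q < n -> c * n = a * p + b * q -> c < a + b.
Proof.
move=> c_gt0 p_lt_n q_lt_n def_cn.
have n_gt0 : 0 < n by apply: leq_ltn_trans p_lt_n.
have : c * n < (a + b) * n by nia.
by rewrite ltn_pmul2r.
Qed.

Theorem lemma1p3 (n1 n2 n3 : nat) :
  (0 < n1)%N -> (n1 < n2)%N -> (n2 < n3)%N ->
  gcdn (gcdn n1 n2) n3 = 1%N ->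
  min_gen3 n1 n2 n3 ->
  ~ symmetric3 n1 n2 n3 ->
  forall (c1 r12 r13 c3 r31 r32 : nat),
    is_c n1 n2 n3 c1 -> (c1 * n1 = r12 * n2 + r13 * n3)%N ->
    is_c n3 n1 n2 c3 -> (c3 * n3 = r31 * n1 + r32 * n2)%N ->
    (r12 + r13 < c1)%N /\ (c3 < r31 + r32)%N.
Proof.
move=> n1_gt0 n12 n23 _ _ _ c1 r12 r13 c3 r31 r32 [c1_gt0 _] def_c1 [c3_gt0 _] def_c3.
have n13 : n1 < n3 := ltn_trans n12 n23.
split.
- exact: coef_sum_lt_of_lt_weights c1_gt0 n1_gt0 n12 n13 def_c1.
- exact: lt_coef_sum_of_gt_weights c3_gt0 n13 n23 def_c3.
Qed.
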